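(* Let $\pi\in\mathsf{G}_{r,n}$ and $a=\text{A-code}(\pi)$. Then, for each $0\le t\le r-1$, (1) $\mathsf{Rmil}(\pi)=\mathsf{Max}(a)$ and $\mathsf{Rmil}^t(\pi)=\mathsf{Max}^t(a)$; (2) $\mathsf{Lmil}(\pi)=\mathsf{Min}(a)$ and $\mathsf{Lmil}^t(\pi)=\mathsf{Min}^t(a)$; (3) $\mathsf{Lmap}(\pi)=\mathsf{Rmil}(a)$ and $\mathsf{Lmap}^t(\pi)=\mathsf{Rmil}^t(a)$; (4) $\mathsf{Lmal}(\pi)=\mathsf{Rmip}(a)$ and $\mathsf{Lmal}^t(\pi)=\mathsf{Rmip}^t(a)$.
   Context: $\mathsf{G}_{r,n}=C_r\wr\mathfrak S_n$: elements are words $\pi=\sigma_1^{[z_1]}\cdots\sigma_n^{[z_n]}$ with $\sigma\in\mathfrak S_n$ (base values) and colors $z_i\in\{0,\dots,r-1\}$. A-code: set $\pi^{(n)}=\pi$; for $j=n,\dots,1$, if the letter with base value $j$ is at position $p$ of $\pi^{(j)}$ with color $t$, put $c_j=p$, $e_j=t$, and delete that letter to get $\pi^{(j-1)}$; $\text{A-code}(\pi)=(c_1^{[e_1]},\dots,c_n^{[e_n]})$. Statistics of $\pi$: $\mathsf{Rmil}(\pi)=\{\sigma_i^{[z_i]}:\sigma_i<\sigma_j\ \forall j>i\}$; $\mathsf{Lmil}(\pi)=\{\sigma_i^{[z_i]}:\sigma_i<\sigma_j\ \forall j<i\}$; $\mathsf{Lmal}(\pi)=\{\sigma_i^{[z_i]}:\sigma_i>\sigma_j\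 \forall j<i\}$; $\mathsf{Lmap}(\pi)=\{i^{[z_i]}:\sigma_i>\sigma_j\ \forall j<i\}$. Statistics of a sequence $a=(c_1^{[e_1]},\dots,c_n^{[e_n]})$: $\mathsf{Max}(a)=\{i^{[e_i]}:c_i=i\}$; $\mathsf{Min}(a)=\{i^{[e_i]}:c_i=1\}$; $\mathsf{Rmil}(a)=\{c_i^{[e_i]}:c_i<c_j\ \forall j>i\}$; $\mathsf{Rmip}(a)=\{i^{[e_i]}:c_i<c_j\ \forall j>i\}$. For any such set $S$ of colored letters and $t\in\{0,\dots,r-1\}$, $S^t:=\{k: k^{[t]}\in S\}$ (e.g. $\mathsf{Rmil}^t(\pi)$, $\mathsf{Max}^t(a)$). *)

From mathcomp Require Import all_boot.
Set Implicit Arguments. Unset Strict Implicit. Unset Printing Implicit Defensive.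

(* A colored letter k^[t] is the pair (k, t) : nat * nat.
   A colored word / colored sequence is a seq of colored letters;
   positions and values are 1-based as in the paper: the i-th entry
   (1-based) is stored at 0-based index i-1. *)
Definition cletter := (nat * nat)%type.
Definition cword := seq cletter.

Definition letter_at (w : cword) (i : nat) : cletter := nth (0, 0) w i.

Definition in_G (r n : nat) (w : cword) : bool :=
  perm_eq (map fst w) (iota 1 n) && all (fun x => x.2 < r) w.

Definition delete_at (p : nat) (w : cword) : cword := take p w ++ drop p.+1 w.

Fixpoint acode_rec (j : nat) (w : cword) : cword :=
  match j with
  | 0 => [::]
  | j'.+1 =>
      let p := index j (map fst w) in
      let t := (letter_at w p).2 in
      rcons (acode_rec j' (delete_at p w)) (p.+1, t)
  end.

Definition acode (n : nat) (w : cword) : cword := acode_rec n w.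

Definition Rmil (w : cword) : seq cletter :=
  [seq letter_at w i | i <- iota 0 (size w) &
     all (fun j => (letter_at w i).1 < (letter_at w j).1) (iota i.+1 (size w - i.+1))].

Definition Lmil (w : cword) : seq cletter :=
  [seq letter_at w i | i <- iota 0 (size w) &
     all (fun j => (letter_at w i).1 < (letter_at w j).1) (iota 0 i)].

Definition Lmal (w : cword) : seq cletter :=
  [seq letter_at w i | i <- iota 0 (size w) &
     all (fun j => (letter_at w i).1 > (letter_at w j).1) (iota 0 i)].

Definition Lmap (w : cword) : seq cletter :=
  [seq (i.+1, (letter_at w i).2) | i <- iota 0 (size w) &
     all (fun j => (letter_at w i).1 > (letter_at w j).1) (iota 0 i)].

Definition Max (a : cword) : seq cletter :=
  [seq (i.+1, (letter_at a i).2) | i <- iota 0 (size a) & (letter_at a i).1 == i.+1].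

Definition Min (a : cword) : seq cletter :=
  [seq (i.+1, (letter_at a i).2) | i <- iota 0 (size a) & (letter_at a i).1 == 1].

(* Rmil(a) is the same notion as Rmil of a word (applied to the c_i). *)

Definition Rmip (a : cword) : seq cletter :=
  [seq (i.+1, (letter_at a i).2) | i <- iota 0 (size a) &
     all (fun j => (letter_at a i).1 < (letter_at a j).1) (iota i.+1 (size a - i.+1))].

Definition colorpart (S : seq cletter) (t : nat) : seq nat :=
  [seq x.1 | x <- S & x.2 == t].

(* Deleting the largest letter n+1 of pi, at position p, yields pi^(n), and the A-code
   of pi is that of pi^(n) followed by (p+1)^[z].  So each statistic of pi is determined by
   the same statistic of pi^(n) and by p: the new letter is a right-to-left minimum iff p is
   the last position, a left-to-right minimum iff p is the first, and always a left-to-right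
   maximum, while the left-to-right maxima of pi^(n) survive exactly when they lie before p.
   On the code side, appending c_{n+1} = p+1 adds an element of Max iff p+1 = n+1, of Min
   iff p+1 = 1, and keeps exactly the right-to-left minima below p+1.  For (4) one also
   needs that a left-to-right maximum sigma_q at position q+1 has c_{sigma_q} = q+1.
   Induction on n then gives all four identities, and their colored versions follow. *)

From mathcomp Require Import all_boot zify.
Set Implicit Arguments. Unset Strict Implicit. Unset Printing Implicit Defensive.

Definition perm_word n (w : cword) := perm_eq (map fst w) (iota 1 n).

Definition dominates (pos val : rel nat) (w : cword) i :=
  forall j, j < size w -> pos i j -> val (letter_at w i).1 (letter_at w j).1.

Notation rl_min := (dominates ltn ltn).
Notation lr_min := (dominates gtn ltn).
Notation lr_max := (dominates gtn gtn).

Lemma mem_filter_iotaP (T : eqType) (f : nat -> T) (P : pred nat) m x :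
  reflect (exists2 i, i < m & P i /\ x = f i) (x \in [seq f i | i <- iota 0 m & P i]).
Proof.
apply: (iffP mapP) => [[i]|[i lt [Pi ->]]].
  by rewrite mem_filter mem_iota => /andP[Pi /andP[_ lt]] ->; exists i.
by exists i; rewrite // mem_filter mem_iota Pi lt.
Qed.

Lemma all_iotaP (P : pred nat) a b : reflect (forall j, a <= j < a + b -> P j) (all P (iota a b)).
Proof. by apply: (iffP allP) => H j Hj; apply: H; rewrite ?mem_iota in Hj *. Qed.

Lemma rl_minP w i : i < size w ->
  reflect (rl_min w i) (all (fun j => (letter_at w i).1 < (letter_at w j).1) (iota i.+1 (size w - i.+1))).
Proof. by move=> lt; apply: (iffP (all_iotaP _ _ _)) => H j *; apply: H; lia. Qed.

Lemma dominates_earlierP (val : rel nat) w i : i < size w ->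
  reflect (dominates gtn val w i) (all (fun j => val (letter_at w i).1 (letter_at w j).1) (iota 0 i)).
Proof. by move=> lt; apply: (iffP (all_iotaP _ _ _)) => H j *; apply: H; lia. Qed.

Lemma RmilP w x :
  reflect (exists2 i, i < size w & rl_min w i /\ x = letter_at w i) (x \in Rmil w).
Proof.
apply: (iffP (mem_filter_iotaP _ _ _ _)) => -[i lt [H ->]];
  by exists i => //; split => //; apply/(rl_minP lt).
Qed.

Lemma RmipP w x :
  reflect (exists2 i, i < size w & rl_min w i /\ x = (i.+1, (letter_at w i).2)) (x \in Rmip w).
Proof.
apply: (iffP (mem_filter_iotaP _ _ _ _)) => -[i lt [H ->]];
  by exists i => //; split => //; apply/(rl_minP lt).
Qed.

Lemma LmilP w x :
  reflect (exists2 i, i < size w & lr_min w i /\ x = letter_at w i) (x \in Lmil w).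
Proof.
apply: (iffP (mem_filter_iotaP _ _ _ _)) => -[i lt [H ->]];
  by exists i => //; split => //; apply/(dominates_earlierP ltn lt).
Qed.

Lemma LmalP w x :
  reflect (exists2 i, i < size w & lr_max w i /\ x = letter_at w i) (x \in Lmal w).
Proof.
apply: (iffP (mem_filter_iotaP _ _ _ _)) => -[i lt [H ->]];
  by exists i => //; split => //; apply/(dominates_earlierP gtn lt).
Qed.

Lemma LmapP w x :
  reflect (exists2 i, i < size w & lr_max w i /\ x = (i.+1, (letter_at w i).2)) (x \in Lmap w).
Proof.
apply: (iffP (mem_filter_iotaP _ _ _ _)) => -[i lt [H ->]];
  by exists i => //; split => //; apply/(dominates_earlierP gtn lt).
Qed.

Lemma ltn_bump2 h i j : (bump h i < bump h j) = (i < j).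
Proof. by rewrite !ltnNge leq_bump2. Qed.

Lemma bump_small h i : i < h -> bump h i = i.
Proof. by move=> lt; rewrite /bump leqNgt lt. Qed.

Lemma exists_bump (Q : nat -> Prop) n p : p < n ->
  (exists2 i, i < n & Q i) <-> Q p \/ exists2 j, j < n.-1 & Q (bump p j).
Proof.
move=> lt_pn; split => [[i lt_in Qi] | [Qp | [j lt_jn Qj]]].
- have [eq_ip | ne_ip] := eqVneq i p; first by left; rewrite -eq_ip.
  right; exists (unbump p i); last by rewrite unbumpK.
  by move: lt_in ne_ip; rewrite /unbump; case: ltnP; lia.
- by exists p.
- by exists (bump p j); rewrite // /bump; case: leqP; lia.
Qed.

Lemma forall_bump (Q : nat -> Prop) n p : p < n ->
  (forall i, i < n -> Q i) <-> Q p /\ forall j, j < n.-1 -> Q (bump p j).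
Proof.
move=> lt_pn; split => [H | [Qp H] i lt_in].
- by split => [|j lt_jn]; apply: H; rewrite // /bump; case: leqP; lia.
- have [-> // | ne_ip] := eqVneq i p; rewrite -(unbumpK ne_ip); apply: H.
  by move: lt_in ne_ip; rewrite /unbump; case: ltnP; lia.
Qed.

Lemma letter_at_rcons s y i :
  letter_at (rcons s y) i = if i < size s then letter_at s i else if i == size s then y else (0, 0).
Proof. exact: nth_rcons. Qed.

Lemma letter_at_rcons_lt s y i : i < size s -> letter_at (rcons s y) i = letter_at s i.
Proof. by move=> lt_i; rewrite letter_at_rcons lt_i. Qed.

Lemma letter_at_rcons_size s y : letter_at (rcons s y) (size s) = y.
Proof. by rewrite letter_at_rcons ltnn eqxx. Qed.

Lemma size_delete_at s p : p < size s -> size (delete_at p s) = (size s).-1.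
Proof. by move=> lt; rewrite size_cat size_take size_drop lt; lia. Qed.

Lemma letter_at_delete_at s p i : letter_at (delete_at p s) i = letter_at s (bump p i).
Proof.
have [lt_ps | le_sp] := ltnP p (size s); last first.
  rewrite /delete_at take_oversize // drop_oversize ?cats0 ?(leqW le_sp) // /letter_at /bump.
  by case: leqP => // le_pi; rewrite !nth_default // (leq_trans le_sp) // leqW.
rewrite /letter_at /delete_at nth_cat size_take lt_ps /bump.
case: ltnP => [lt_ip | le_pi]; first by rewrite nth_take.
by rewrite nth_drop; congr nth; lia.
Qed.

(* No uniqueness of letters is needed: a left-to-right maximum cannot occur earlier. *)
Lemma lr_max_mem_take s i k :
  i < size s -> lr_max s i -> (letter_at s i \in take k s) = (i < k).
Proof.
move=> lt_i H; rewrite in_take ?mem_nth //; congr (_ < k); apply/eqP.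
rewrite eqn_leq index_nth //=; rewrite leqNgt; apply/negP => lt_idx.
have := H _ (ltn_trans lt_idx lt_i) lt_idx; rewrite /= /letter_at nth_index ?mem_nth //.
by rewrite ltnn.
Qed.

Section DeleteMax.

Variables (w : cword) (p : nat).
Hypothesis lt_p_size : p < size w.

Local Notation w' := (delete_at p w).

Lemma dominates_bump (pos val : rel nat) i :
  (forall j k, pos (bump p j) (bump p k) = pos j k) -> i < (size w).-1 ->
  dominates pos val w (bump p i) <->
  (pos (bump p i) p -> val (letter_at w (bump p i)).1 (letter_at w p).1) /\ dominates pos val w' i.
Proof.
move=> pos_bump lt_i; rewrite /dominates size_delete_at //.
set Q := fun j => pos (bump p i) j -> val (letter_at w (bump p i)).1 (letter_at w j).1.
rewrite -[X in X <-> _]/(forall j, j < size w -> Q j) (forall_bump Q lt_p_size) /Q.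
by split=> -[Hp H]; split=> // j /H; rewrite !letter_at_delete_at pos_bump.
Qed.

Hypothesis p_max :
  forall i, i < size w -> i != p -> (letter_at w i).1 < (letter_at w p).1.

Lemma letter_bump_lt_max i : i < (size w).-1 -> (letter_at w (bump p i)).1 < (letter_at w p).1.
Proof.
by move=> lt_i; apply: p_max; [rewrite /bump; case: leqP; lia | rewrite eq_sym neq_bump].
Qed.

Lemma rl_min_delete i : i < (size w).-1 -> rl_min w (bump p i) <-> rl_min w' i.
Proof.
move=> lt_i; rewrite dominates_bump //; last by move=> j k /=; rewrite ltn_bump2.
by split=> [[]|] // H; split=> // _; apply: letter_bump_lt_max.
Qed.

Lemma lr_min_delete i : i < (size w).-1 -> lr_min w (bump p i) <-> lr_min w' i.
Proof.
move=> lt_i; rewrite dominates_bump //; last by move=> j k /=; rewrite ltn_bump2.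
by split=> [[]|] // H; split=> // _; apply: letter_bump_lt_max.
Qed.

Lemma lr_max_delete i : i < (size w).-1 -> lr_max w (bump p i) <-> i < p /\ lr_max w' i.
Proof.
move=> lt_i; rewrite dominates_bump //; last by move=> j k /=; rewrite ltn_bump2.
have := letter_bump_lt_max lt_i; have [lt_ip | le_pi] := ltnP i p.
- by rewrite bump_small //= => _; split=> -[_ H]; split=> //; lia.
- have -> : bump p i = i.+1 by rewrite /bump le_pi.
  move=> lt_max; split=> -[] // H _.
  have lt_max' : (letter_at w p).1 < (letter_at w i.+1).1 := H le_pi.
  lia.
Qed.

Lemma rl_min_at_max : rl_min w p <-> p = (size w).-1.
Proof.
split=> [H | ->]; last by move=> j lt_j /=; lia.
have lt_last : (size w).-1 < size w by lia.
have [lt_p_last | ] := ltnP p (size w).-1; last lia.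
have /= := H _ lt_last lt_p_last; have := p_max lt_last; rewrite neq_ltn lt_p_last orbT.
lia.
Qed.

Lemma lr_min_at_max : lr_min w p <-> p = 0.
Proof.
split=> [H | ->]; last by move=> j lt_j /=; lia.
have [// | pos_p] := posnP p.
have lt_0 := ltn_trans pos_p lt_p_size.
have : (letter_at w p).1 < (letter_at w 0).1 := H 0 lt_0 pos_p.
by have := p_max lt_0; rewrite eq_sym -lt0n pos_p; lia.
Qed.

Lemma lr_max_at_max : lr_max w p.
Proof. by move=> j lt_j lt_jp; apply: p_max; rewrite // ltn_eqF. Qed.

Lemma mem_Rmil_delete x :
  (x \in Rmil w) = (p == (size w).-1) && (x == letter_at w p) || (x \in Rmil w').
Proof.
have split_p := exists_bump (fun i => rl_min w i /\ x = letter_at w i) lt_p_size.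
cbv beta in split_p; apply/RmilP/idP.
- case/split_p => [[/rl_min_at_max -> ->] | [i lt_i [H ->]]]; first by rewrite !eqxx.
  apply/orP; right; apply/RmilP; exists i; first by rewrite size_delete_at.
  by rewrite letter_at_delete_at -rl_min_delete.
- case/orP => [/andP[/eqP/rl_min_at_max H /eqP x_p] | /RmilP[i lt_i [H x_i]]]; apply/split_p.
    by left.
  rewrite size_delete_at // in lt_i; right; exists i => //.
  by split; [apply/rl_min_delete | rewrite x_i letter_at_delete_at].
Qed.

Lemma mem_Lmil_delete x :
  (x \in Lmil w) = (p == 0) && (x == letter_at w p) || (x \in Lmil w').
Proof.
have split_p := exists_bump (fun i => lr_min w i /\ x = letter_at w i) lt_p_size.
cbv beta in split_p; apply/LmilP/idP.
- case/split_p => [[/lr_min_at_max -> ->] | [i lt_i [H ->]]]; first by rewrite !eqxx.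
  apply/orP; right; apply/LmilP; exists i; first by rewrite size_delete_at.
  by rewrite letter_at_delete_at -lr_min_delete.
- case/orP => [/andP[/eqP/lr_min_at_max H /eqP x_p] | /LmilP[i lt_i [H x_i]]]; apply/split_p.
    by left.
  rewrite size_delete_at // in lt_i; right; exists i => //.
  by split; [apply/lr_min_delete | rewrite x_i letter_at_delete_at].
Qed.

Lemma mem_Lmap_delete x :
  (x \in Lmap w) = (x == (p.+1, (letter_at w p).2)) || (x \in Lmap w') && (x.1 <= p).
Proof.
have split_p := exists_bump (fun i => lr_max w i /\ x = (i.+1, (letter_at w i).2)) lt_p_size.
cbv beta in split_p; apply/LmapP/idP.
- case/split_p => [[_ ->] | [i lt_i [/lr_max_delete [// | lt_ip H] ->]]]; first by rewrite eqxx.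
  rewrite bump_small //; apply/orP; right; apply/andP; split=> //.
  apply/LmapP; exists i; first by rewrite size_delete_at.
  by rewrite letter_at_delete_at bump_small.
- case/orP => [/eqP x_p | /andP[/LmapP[i lt_i [H x_i]] lt_ip]]; apply/split_p.
    by left; split=> //; apply: lr_max_at_max.
  rewrite x_i /= in lt_ip; rewrite size_delete_at // in lt_i; right; exists i => //.
  split; [exact/(lr_max_delete lt_i) | by rewrite x_i letter_at_delete_at bump_small].
Qed.

Lemma mem_Lmal_delete x :
  (x \in Lmal w) = (x == letter_at w p) || (x \in Lmal w') && (x \in take p w').
Proof.
have split_p := exists_bump (fun i => lr_max w i /\ x = letter_at w i) lt_p_size.
cbv beta in split_p; apply/LmalP/idP.
- case/split_p => [[_ ->] | [i lt_i [/lr_max_delete [// | lt_ip H] ->]]]; first by rewrite eqxx.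
  have lt_i' : i < size w' by rewrite size_delete_at.
  rewrite -letter_at_delete_at lr_max_mem_take // lt_ip andbT; apply/orP; right.
  by apply/LmalP; exists i.
- case/orP => [/eqP x_p | /andP[/LmalP[i lt_i [H x_i]] lt_ip]]; apply/split_p.
    by left; split=> //; apply: lr_max_at_max.
  rewrite x_i lr_max_mem_take // in lt_ip; rewrite size_delete_at // in lt_i.
  by right; exists i; rewrite // x_i letter_at_delete_at; split=> //; apply/(lr_max_delete lt_i).
Qed.

End DeleteMax.

Lemma rl_min_rcons a y i :
  i < size a -> rl_min (rcons a y) i <-> rl_min a i /\ (letter_at a i).1 < y.1.
Proof.
move=> lt_i; rewrite /dominates size_rcons letter_at_rcons_lt //.
split=> [H | [H lt_y] j].
- split=> [j lt_j lt_ij|]; last by have := H _ (ltnSn _) lt_i; rewrite letter_at_rcons_size.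
  by have := H _ (ltnW lt_j) lt_ij; rewrite letter_at_rcons_lt.
- rewrite ltnS leq_eqVlt => /predU1P[-> _ | lt_j]; first by rewrite letter_at_rcons_size.
  by rewrite letter_at_rcons_lt //; apply: H.
Qed.

Lemma rl_min_rcons_size a y : rl_min (rcons a y) (size a).
Proof. by rewrite /dominates size_rcons => j lt_j lt_aj; lia. Qed.

Definition places (P : nat -> nat -> bool) (a : cword) :=
  [seq (i.+1, (letter_at a i).2) | i <- iota 0 (size a) & P i (letter_at a i).1].

Lemma places_rcons P a y :
  places P (rcons a y) = places P a ++ (if P (size a) y.1 then [:: ((size a).+1, y.2)] else [::]).
Proof.
rewrite /places size_rcons -{1}addn1 iotaD filter_cat map_cat /= add0n letter_at_rcons_size.
f_equal; last by case: ifP => //= _; rewrite letter_at_rcons_size.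
have E : {in iota 0 (size a), letter_at (rcons a y) =1 letter_at a}.
  by move=> i; rewrite mem_iota => /andP[_ /letter_at_rcons_lt ->].
rewrite (eq_in_filter (a2 := fun i => P i (letter_at a i).1)) => [|i /E -> //].
by apply/eq_in_map => i; rewrite mem_filter => /andP[_ /E ->].
Qed.

Lemma Max_rcons a y :
  Max (rcons a y) = Max a ++ (if y.1 == (size a).+1 then [:: ((size a).+1, y.2)] else [::]).
Proof. exact: (places_rcons (fun i c => c == i.+1)). Qed.

Lemma Min_rcons a y :
  Min (rcons a y) = Min a ++ (if y.1 == 1 then [:: ((size a).+1, y.2)] else [::]).
Proof. exact: (places_rcons (fun _ c => c == 1)). Qed.

Lemma mem_Rmil_rcons a y x :
  (x \in Rmil (rcons a y)) = (x == y) || (x \in Rmil a) && (x.1 < y.1).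
Proof.
apply/RmilP/idP; rewrite size_rcons.
- case=> i; rewrite ltnS leq_eqVlt => /predU1P[-> [_ ->] | lt_i [/(rl_min_rcons _ lt_i)[H lt_y] ->]].
    by rewrite letter_at_rcons_size eqxx.
  by rewrite letter_at_rcons_lt // lt_y andbT; apply/orP; right; apply/RmilP; exists i.
- case/orP => [/eqP -> | /andP[/RmilP[i lt_i [H ->]] lt_y]].
    by exists (size a) => //; split; [apply: rl_min_rcons_size | rewrite letter_at_rcons_size].
  exists i; first exact: ltnW.
  by split; [apply/rl_min_rcons | rewrite letter_at_rcons_lt].
Qed.

Lemma mem_Rmip_rcons a y x :
  (x \in Rmip (rcons a y)) =
  (x == ((size a).+1, y.2)) || (x \in Rmip a) && ((letter_at a x.1.-1).1 < y.1).
Proof.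
apply/RmipP/idP; rewrite size_rcons.
- case=> i; rewrite ltnS leq_eqVlt => /predU1P[-> [_ ->] | lt_i [/(rl_min_rcons _ lt_i)[H lt_y] ->]].
    by rewrite letter_at_rcons_size eqxx.
  by rewrite letter_at_rcons_lt //= lt_y andbT; apply/orP; right; apply/RmipP; exists i.
- case/orP => [/eqP -> | /andP[/RmipP[i lt_i [H ->]] /= lt_y]].
    by exists (size a) => //; split; [apply: rl_min_rcons_size | rewrite letter_at_rcons_size].
  exists i; first exact: ltnW.
  by split; [apply/rl_min_rcons | rewrite letter_at_rcons_lt].
Qed.

Lemma perm_word_size n w : perm_word n w -> size w = n.
Proof. by move/perm_size; rewrite size_map size_iota. Qed.

Section PermWordMax.

Variables (n : nat) (w : cword).
Hypothesis w_perm : perm_word n.+1 w.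
Local Notation p := (index n.+1 (map fst w)).

Lemma perm_word_uniq : uniq (map fst w).
Proof. by rewrite (perm_uniq w_perm) iota_uniq. Qed.

Lemma mem_max_perm_word : n.+1 \in map fst w.
Proof. by rewrite (perm_mem w_perm) mem_iota; lia. Qed.

Lemma index_max_lt : p < size w.
Proof. by rewrite -(size_map fst) index_mem mem_max_perm_word. Qed.

Lemma letter_at_index_max : (letter_at w p).1 = n.+1.
Proof. by rewrite /letter_at -(nth_map _ 0) ?index_max_lt // nth_index ?mem_max_perm_word. Qed.

Lemma letter_at_lt_max i : i < size w -> i != p -> (letter_at w i).1 < n.+1.
Proof.
move=> lt_i ne_ip.
have : (letter_at w i).1 \in iota 1 n.+1 by rewrite -(perm_mem w_perm) (map_f fst) ?mem_nth.
rewrite mem_iota => /andP[_ le_max]; rewrite ltn_neqAle -ltnS -[n.+2]/(1 + n.+1) le_max andbT.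
apply: contra ne_ip => /eqP eq_max.
rewrite -(nth_uniq 0 _ _ perm_word_uniq) ?size_map ?index_max_lt //.
by rewrite !(nth_map (0, 0)) ?index_max_lt //; apply/eqP; rewrite [LHS]eq_max letter_at_index_max.
Qed.

Lemma perm_word_delete_max : perm_word n (delete_at p w).
Proof.
rewrite /perm_word.
have -> : map fst (delete_at p w) = rem n.+1 (map fst w).
  by rewrite remE /delete_at map_cat map_take map_drop.
rewrite -(perm_cons n.+1).
rewrite -(permPl (perm_to_rem mem_max_perm_word)) (permPl w_perm).
have -> : iota 1 n.+1 = iota 1 n ++ [:: n.+1] by rewrite -[X in iota _ X]addn1 iotaD add1n.
by rewrite perm_catC.
Qed.

End PermWordMax.

Lemma size_acode_rec n w : size (acode_rec n w) = n.
Proof. by elim: n w => //= n IH w; rewrite size_rcons IH. Qed.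

Lemma perm_word_ind (P : nat -> cword -> Prop) :
  P 0 [::] ->
  (forall n w p, size w = n.+1 -> p < size w -> (letter_at w p).1 = n.+1 ->
     (forall i, i < size w -> i != p -> (letter_at w i).1 < (letter_at w p).1) ->
     acode_rec n.+1 w = rcons (acode_rec n (delete_at p w)) (p.+1, (letter_at w p).2) ->
     perm_word n (delete_at p w) -> P n (delete_at p w) -> P n.+1 w) ->
  forall n w, perm_word n w -> P n w.
Proof.
move=> P0 PS; elim=> [|n IH] w w_perm; first by rewrite (size0nil (perm_word_size w_perm)).
apply: (PS n w (index n.+1 (map fst w))) => //.
- exact: perm_word_size.
- exact: index_max_lt.
- exact: letter_at_index_max.
- by rewrite letter_at_index_max //; apply: letter_at_lt_max.
- exact: perm_word_delete_max.
- exact/IH/perm_word_delete_max.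
Qed.

Lemma Rmil_acode n w : perm_word n w -> Rmil w =i Max (acode_rec n w).
Proof.
move: n w; apply: perm_word_ind => // n w p size_w lt_p val_p max_p -> _ IH x.
rewrite (mem_Rmil_delete lt_p max_p) Max_rcons mem_cat -IH size_acode_rec size_w /= eqSS orbC.
by rewrite -val_p -surjective_pairing; case: (p == n); rewrite ?mem_seq1 ?orbF.
Qed.

Lemma Lmil_acode n w : perm_word n w -> Lmil w =i Min (acode_rec n w).
Proof.
move: n w; apply: perm_word_ind => // n w p _ lt_p val_p max_p -> _ IH x.
rewrite (mem_Lmil_delete lt_p max_p) Min_rcons mem_cat -IH size_acode_rec /= orbC.
by rewrite -val_p -surjective_pairing eqSS; case: (p == 0); rewrite ?mem_seq1 ?orbF.
Qed.

Lemma Lmap_acode n w : perm_word n w -> Lmap w =i Rmil (acode_rec n w).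
Proof.
move: n w; apply: perm_word_ind => // n w p _ lt_p _ max_p -> _ IH x.
by rewrite (mem_Lmap_delete lt_p max_p) mem_Rmil_rcons -IH ltnS.
Qed.

(* The letters before a left-to-right maximum are smaller, so none of them is deleted
   before it and it keeps its position in the A-code. *)
Lemma acode_at_lr_max n w : perm_word n w ->
  forall q, q < size w -> lr_max w q -> (letter_at (acode_rec n w) (letter_at w q).1.-1).1 = q.+1.
Proof.
move: n w; apply: perm_word_ind => // n w p size_w lt_p val_p max_p -> _ IH q lt_q lr_q.
have [-> | ne_qp] := eqVneq q p.
  by rewrite val_p letter_at_rcons size_acode_rec ltnn eqxx.
have lt_qp : q < p.
  rewrite ltn_neqAle ne_qp leqNgt; apply/negP => lt_pq.
  have : (letter_at w p).1 < (letter_at w q).1 := lr_q p lt_p lt_pq.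
  by have := max_p q lt_q ne_qp; lia.
have lt_q_last : q < (size w).-1 by rewrite size_w /=; lia.
have lr_q' : lr_max (delete_at p w) q.
  by move: lr_q; rewrite -{1}(bump_small lt_qp) lr_max_delete // => -[].
have w_q : letter_at w q = letter_at (delete_at p w) q.
  by rewrite letter_at_delete_at bump_small.
have := max_p q lt_q ne_qp; rewrite val_p w_q => lt_val.
rewrite letter_at_rcons_lt; first by apply: IH; rewrite ?size_delete_at.
by rewrite size_acode_rec; lia.
Qed.

Lemma Lmal_acode n w : perm_word n w -> Lmal w =i Rmip (acode_rec n w).
Proof.
move: n w; apply: perm_word_ind => // n w p _ lt_p val_p max_p -> w'_perm IH x.
rewrite (mem_Lmal_delete lt_p max_p) mem_Rmip_rcons -IH size_acode_rec.
rewrite -val_p -surjective_pairing; case: (x == _) => //=.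
case x_in: (x \in Lmal _) => //=; case/LmalP: x_in => q lt_q [lr_q ->].
by rewrite lr_max_mem_take // (acode_at_lr_max w'_perm lt_q lr_q) ltnS.
Qed.

Lemma eq_mem_colorpart (S S' : seq cletter) t : S =i S' -> colorpart S t =i colorpart S' t.
Proof.
move=> eq_S k; apply/mapP/mapP => -[y]; rewrite mem_filter => /andP[y_t y_S] ->;
  by exists y; rewrite // mem_filter y_t /= ?eq_S // -eq_S.
Qed.

Theorem lemma3p2 (r n : nat) (w : cword) :
  in_G r n w ->
  let a := acode n w in
  [/\ (Rmil w =i Max a /\ forall t, t < r -> colorpart (Rmil w) t =i colorpart (Max a) t),
      (Lmil w =i Min a /\ forall t, t < r -> colorpart (Lmil w) t =i colorpart (Min a) t),
      (Lmap w =i Rmil a /\ forall t, t < r -> colorpart (Lmap w) t =i colorpart (Rmil a) t) &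
      (Lmal w =i Rmip a /\ forall t, t < r -> colorpart (Lmal w) t =i colorpart (Rmip a) t)].
Proof.
move=> /andP[w_perm _] a.
have Rmil_Max := Rmil_acode w_perm; have Lmil_Min := Lmil_acode w_perm.
have Lmap_Rmil := Lmap_acode w_perm; have Lmal_Rmip := Lmal_acode w_perm.
by split; split=> // t _; apply: eq_mem_colorpart.
Qed.
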